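(* Let $R,r,I,\iota,L,G,P$ be real numbers with $R>0$, $0<r<R$, $I>0$, $0<\iota<I$, $\iota<r$, $L>0$, $G>0$, $P>0$ and $G+P-L>r-\iota$, and set $$a=G+P-r-L+\iota,\quad b=r-\iota+\tfrac{L}{2},\quad c=G+I-\iota+P,\quad d=\tfrac{L}{2}+\iota.$$ Let $M=\{(x,y)\in\mathbb{R}^2:0<x,y<1\}$, $\varphi(x,y)=xy(1-x)(1-y)$, $\omega=\frac{1}{\varphi}\mathrm{d}x\wedge\mathrm{d}y$, and $H:M\to\mathbb{R}$, $H(x,y)=c\ln(x)+d\ln(1-x)+a\ln(y)+b\ln(1-y)$. Then the solutions (in $M$) of the system $$\dot x=x(1-x)\big(a-(a+b)y\big),\qquad \dot y=y(1-y)\big(-c+(c+d)x\big)$$ are exactly the motions of the Hamiltonian system $(M,\omega,H)$.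
   Context: The Hamiltonian vector field $X_H$ is defined by $\omega(X_H,\cdot)=\mathrm{d}H$. A motion of the Hamiltonian system $(M,\omega,H)$ is a differentiable curve $\gamma$ in $M$ with $\frac{\mathrm{d}}{\mathrm{d}t}\gamma(t)|_{t=s}=X_H(\gamma(s))$ for all $s$. *)

From HB Require Import structures.
From mathcomp Require Import all_boot all_order all_algebra.
From mathcomp Require Import all_classical all_reals all_analysis.
Set Implicit Arguments. Unset Strict Implicit. Unset Printing Implicit Defensive.
Import Order.TTheory GRing.Theory Num.Theory.
Import numFieldNormedType.Exports.
Local Open Scope classical_set_scope.
Local Open Scope ring_scope.

Section Defs.
Variable R : realType.

Definition Msq : set (R * R) :=
  [set p | 0 < p.1 < 1 /\ 0 < p.2 < 1].

Definition phi (p : R * R) : R := p.1 * p.2 * (1 - p.1) * (1 - p.2).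

(* omega = (1/phi) dx /\ dy, evaluated at p on tangent vectors u v *)
Definition omega (p u v : R * R) : R := (u.1 * v.2 - u.2 * v.1) / phi p.

Definition Ham (a b c d : R) (p : R * R) : R :=
  c * ln p.1 + d * ln (1 - p.1) + a * ln p.2 + b * ln (1 - p.2).

Definition hamVF (H : R * R -> R) (p : R * R) : R * R :=
  get (fun v : R * R => forall w : R * R, omega p v w = 'd H p w).

Definition is_motion (H : R * R -> R) (D : set R) (gam : R -> R * R) : Prop :=
  (forall s, D s -> Msq (gam s)) /\
  (forall s, D s -> derivable gam s 1 /\ 'D_1 gam s = hamVF H (gam s)).

Definition odeField (a b c d : R) (p : R * R) : R * R :=
  (p.1 * (1 - p.1) * (a - (a + b) * p.2),
   p.2 * (1 - p.2) * (- c + (c + d) * p.1)).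

Definition is_solution (a b c d : R) (D : set R) (gam : R -> R * R) : Prop :=
  (forall s, D s -> Msq (gam s)) /\
  (forall s, D s -> derivable gam s 1 /\ 'D_1 gam s = odeField a b c d (gam s)).

End Defs.

(* On M the density phi is positive, so omega is nondegenerate and X_H is the
   unique v with (v.1 w.2 - v.2 w.1) / phi = dH w for all w.  Since
   dH = (c/x - d/(1-x)) dx + (a/y - b/(1-y)) dy, this gives
   X_H = phi (dH/dy, - dH/dx), which is exactly the right-hand side of the
   system; hence solutions and motions satisfy the same differential equation. *)
From HB Require Import structures.
From mathcomp Require Import all_boot all_order all_algebra.
From mathcomp Require Import all_classical all_reals all_analysis.
From mathcomp Require Import ring.

Set Implicit Arguments.
Unset Strict Implicit.
Unset Printing Implicit Defensive.

Import Order.TTheory GRing.Theory Num.Theory.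
Import numFieldNormedType.Exports.
Local Open Scope classical_set_scope.
Local Open Scope ring_scope.

Section Diff.
Context {R : realType}.

Section Product.
Context {V W : normedModType R}.

Lemma continuous_fst : continuous (@fst V W).
Proof. by move=> p; exact: cvg_fst. Qed.

Lemma continuous_snd : continuous (@snd V W).
Proof. by move=> p; exact: cvg_snd. Qed.

Global Instance is_diff_fst (p : V * W) : is_diff p fst fst.
Proof.
apply: DiffDef; first exact/linear_differentiable/continuous_fst.
by rewrite diff_lin //; apply: continuous_fst.
Qed.

Global Instance is_diff_snd (p : V * W) : is_diff p snd snd.
Proof.
apply: DiffDef; first exact/linear_differentiable/continuous_snd.
by rewrite diff_lin //; apply: continuous_snd.
Qed.

End Product.

Lemma is_diff_ln (x : R) : 0 < x -> is_diff x (@ln R) ( *:%R^~ x^-1).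
Proof.
move=> x0; have [dln Dln] := is_derive1_ln x0.
apply: DiffDef; first exact/derivable1_diffP.
by rewrite deriv1E // derive1E Dln.
Qed.

Lemma is_diff_ln_comp (V : normedModType R) (f df : V -> R) (x : V) :
  is_diff x f df -> 0 < f x -> is_diff x (@ln R \o f) (fun w => df w / f x).
Proof. by move=> dfx fx0; apply: is_diff_comp dfx (is_diff_ln fx0). Qed.

Definition dHam (a b c d : R) (p w : R * R) : R :=
  w.1 * (c / p.1 - d / (1 - p.1)) + w.2 * (a / p.2 - b / (1 - p.2)).

Lemma is_diff_Ham (a b c d : R) (p : R * R) : Msq p ->
  is_diff p (Ham a b c d) (dHam a b c d p).
Proof.
case=> /andP[x0 x1] /andP[y0 y1].
have dx := is_diff_ln_comp (is_diff_fst p) x0.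
have dy := is_diff_ln_comp (is_diff_snd p) y0.
have x1' : 0 < (cst 1 - fst) p :> R by rewrite /= subr_gt0.
have y1' : 0 < (cst 1 - snd) p :> R by rewrite /= subr_gt0.
have dx' := is_diff_ln_comp (is_diffB (is_diff_cst (1 : R) p) (is_diff_fst p)) x1'.
have dy' := is_diff_ln_comp (is_diffB (is_diff_cst (1 : R) p) (is_diff_snd p)) y1'.
have dH := is_diffD (is_diffD (is_diffD (is_diffZ c dx) (is_diffZ d dx'))
                              (is_diffZ a dy)) (is_diffZ b dy').
apply: is_diff_eq dH _; apply/funext => w.
by rewrite /dHam !fctE /= !sub0r /GRing.scale /=; ring.
Qed.

Lemma phi_neq0 (p : R * R) : Msq p -> phi p != 0.
Proof.
case=> /andP[x0 x1] /andP[y0 y1].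
by rewrite /phi !mulf_neq0 // ?gt_eqF // ?subr_gt0.
Qed.

Lemma omega_nondegenerate (p u v : R * R) : phi p != 0 ->
  (forall w, omega p u w = omega p v w) -> u = v.
Proof.
move=> phi0 Euv; have /(mulIf (invr_neq0 phi0)) := Euv (0, 1).
have /(mulIf (invr_neq0 phi0)) := Euv (1, 0).
case: u v {Euv} => [u1 u2] [v1 v2] /=.
by rewrite !mulr0 !mulr1 !sub0r !subr0 => /oppr_inj -> ->.
Qed.

Lemma hamVF_unique (H : R * R -> R) (p v : R * R) : phi p != 0 ->
  (forall w, omega p v w = 'd H p w) -> hamVF H p = v.
Proof.
move=> phi0 Hv; apply: (omega_nondegenerate phi0) => w.
rewrite Hv; pose P u := forall w, omega p u w = 'd H p w.
by apply: (@getPex _ P); exists v.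
Qed.

Lemma omega_odeField (a b c d : R) (p w : R * R) : Msq p ->
  omega p (odeField a b c d p) w = dHam a b c d p w.
Proof.
case=> /andP[x0 x1] /andP[y0 y1].
rewrite /omega /phi /odeField /dHam /=.
by field; rewrite ?gt_eqF ?subr_gt0.
Qed.

Lemma hamVF_Ham (a b c d : R) (p : R * R) : Msq p ->
  hamVF (Ham a b c d) p = odeField a b c d p.
Proof.
move=> Mp; have dH := is_diff_Ham a b c d Mp.
by apply: hamVF_unique => [|w]; rewrite ?phi_neq0 // omega_odeField // diff_val.
Qed.

Lemma is_solution_motion (a b c d : R) (D : set R) (gam : R -> R * R) :
  is_solution a b c d D gam <-> is_motion (Ham a b c d) D gam.
Proof.
by split=> -[MD dD]; split=> // s Ds; have [dv ->] := dD s Ds;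
  rewrite hamVF_Ham //; apply: MD.
Qed.
End Diff.


Theorem mainTheorem6 (R : realType) (Rr r I iota L G P : R) :
  0 < Rr -> 0 < r -> r < Rr -> 0 < I -> 0 < iota -> iota < I -> iota < r ->
  0 < L -> 0 < G -> 0 < P -> r - iota < G + P - L ->
  let a := G + P - r - L + iota in
  let b := r - iota + L / 2 in
  let c := G + I - iota + P in
  let d := L / 2 + iota in
  forall (D : set R) (gam : R -> R * R), open D ->
    is_solution a b c d D gam <-> is_motion (Ham a b c d) D gam.
Proof.
by move=> *; apply: is_solution_motion.
Qed.
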